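(* Let $\bar{B}>0$, $\gamma>0$, $p\in(0,1]$, and let $\{E_t\}_{t\ge1}$ be i.i.d. with $E_t=\bar{B}$ with probability $p$ and $E_t=0$ with probability $1-p$. Consider the policy $g_t=p\,b_t$, where $b_1=\bar{B}$ and $b_t=\min\{b_{t-1}-g_{t-1}+E_t,\bar{B}\}$ for $t\ge2$. Then, with $\mu=p\bar{B}$ and $\mathscr{T}_n(\mathbf{g})=\frac{1}{n}\mathbb{E}\big[\sum_{t=1}^n\frac12\log_2(1+\gamma g_t)\big]$, \[ \liminf_{n\to\infty}\mathscr{T}_n(\mathbf{g})\geq \frac{1}{2}\cdot\frac{1}{2}\log_2(1+\gamma\mu). \]
   Context: Energy harvesting channel with battery capacity $\bar B$, battery level $b_t$, allocated energy $g_t$ at time $t$ and rate $\frac12\log_2(1+\gamma g_t)$; expectation over the energy arrivals. *)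

From Stdlib Require Import Reals List.
From Coquelicot Require Import Coquelicot.
Import ListNotations.
Open Scope R_scope.

Definition log2 (x : R) : R := ln x / ln 2.

(** All arrival patterns of length n: bit k = true means E_{k+1} = Bbar. *)
Fixpoint all_patterns (n : nat) : list (list bool) :=
  match n with
  | O => [nil]
  | S k => flat_map (fun l => [true :: l; false :: l]) (all_patterns k)
  end.

Definition pattern_prob (p : R) (l : list bool) : R :=
  fold_right Rmult 1 (map (fun b : bool => if b then p else 1 - p) l).

(** Energy arrival E_{k+1} (0-based index k) determined by the pattern. *)
Definition arrival (Bbar : R) (w : nat -> bool) (k : nat) : R :=
  if w k then Bbar else 0.

(** Battery level b_{k+1} (0-based index k) under the policy g_t = p b_t:
    b_1 = Bbar, b_t = min(b_{t-1} - g_{t-1} + E_t, Bbar). *)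
Fixpoint battery (Bbar p : R) (E : nat -> R) (k : nat) : R :=
  match k with
  | O => Bbar
  | S j => Rmin (battery Bbar p E j - p * battery Bbar p E j + E (S j)) Bbar
  end.

Definition alloc (Bbar p : R) (E : nat -> R) (k : nat) : R :=
  p * battery Bbar p E k.

Definition total_rate (Bbar p gamma : R) (E : nat -> R) (n : nat) : R :=
  fold_right Rplus 0
    (map (fun k => / 2 * log2 (1 + gamma * alloc Bbar p E k)) (seq 0 n)).

(** T_n(g) = (1/n) E[ sum_{t=1}^n (1/2) log2(1 + gamma g_t) ], the expectation
    over i.i.d. arrivals E_1..E_n written as the finite sum over all patterns. *)
Definition throughput (Bbar p gamma : R) (n : nat) : R :=
  / INR n *
  fold_right Rplus 0
    (map (fun l => pattern_prob p l *
                   total_rate Bbar p gamma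
                     (arrival Bbar (fun k => nth k l false)) n)
         (all_patterns n)).

(** Normalise the battery by [Bbar]: the level [Y] jumps to 1 on an arrival and is
    multiplied by [1 - p] otherwise, independently of the past.  Hence
    [E Y_(t+1) = p + (1 - p)^2 E Y_t], whose fixed point is [1 / (2 - p)]; starting
    from [Y_1 = 1] one gets [E Y_t >= 1 / (2 - p) >= 1 / 2] for every [t].  Concavity
    of [log2 (1 + .)] gives [rate_t >= Y_t * (1/2) log2 (1 + gamma p Bbar)], and
    averaging over [t] yields the bound for every [n >= 1]. *)

From Stdlib Require Import Reals List Lra Lia.
From Coquelicot Require Import Coquelicot.
Open Scope R_scope.

Lemma ln_le_sub_1 (x : R) : 0 < x -> ln x <= x - 1.
Proof.
  intros Hx; pose proof (exp_ineq1_le (ln x)) as H.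
  rewrite exp_ln in H; lra.
Qed.

Lemma ln_ge_1_sub_inv (x : R) : 0 < x -> 1 - / x <= ln x.
Proof.
  intros Hx; pose proof (ln_le_sub_1 (/ x) (Rinv_0_lt_compat _ Hx)) as H.
  rewrite ln_Rinv in H; lra.
Qed.

Lemma ln_chord (a y : R) : 0 <= a -> 0 <= y <= 1 ->
  y * ln (1 + a) <= ln (1 + a * y).
Proof.
  intros Ha Hy.
  set (u := 1 + a * y).
  assert (Hu : 0 < u) by (unfold u; nra).
  (* ln (1 + a) - ln u <= (1 + a - u) / u  and  (u - 1) / u <= ln u, while
     y (1 + a - u) = (1 - y) (u - 1). *)
  assert (Hupper : ln (1 + a) - ln u <= a * (1 - y) / u).
  { replace (1 + a) with ((1 + a) / u * u) at 1 by (field; lra).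
    rewrite ln_mult; [| apply Rdiv_lt_0_compat | ]; try lra.
    pose proof (ln_le_sub_1 ((1 + a) / u) ltac:(apply Rdiv_lt_0_compat; lra)).
    replace (a * (1 - y) / u) with ((1 + a) / u - 1) by (unfold u in *; field; lra).
    lra. }
  assert (Hlower : a * y / u <= ln u).
  { pose proof (ln_ge_1_sub_inv u Hu).
    replace (a * y / u) with (1 - / u) by (unfold u in *; field; lra); lra. }
  assert (y * (a * (1 - y) / u) = (1 - y) * (a * y / u)) by (field; lra).
  assert (y * (ln (1 + a) - ln u) <= y * (a * (1 - y) / u))
    by (apply Rmult_le_compat_l; lra).
  assert ((1 - y) * (a * y / u) <= (1 - y) * ln u)
    by (apply Rmult_le_compat_l; lra).
  nra.
Qed.

Lemma ln2_pos : 0 < ln 2.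
Proof. pose proof ln_lt_2; lra. Qed.

Lemma log2_chord (a y : R) : 0 <= a -> 0 <= y <= 1 ->
  y * log2 (1 + a) <= log2 (1 + a * y).
Proof.
  intros Ha Hy; unfold log2, Rdiv.
  pose proof (Rinv_0_lt_compat _ ln2_pos).
  rewrite <- Rmult_assoc.
  apply Rmult_le_compat_r; [lra | exact (ln_chord a y Ha Hy)].
Qed.

Lemma log2_1_plus_ge0 (a : R) : 0 <= a -> 0 <= log2 (1 + a).
Proof.
  intros Ha; unfold log2, Rdiv.
  apply Rmult_le_pos; [| left; apply Rinv_0_lt_compat, ln2_pos].
  rewrite <- ln_1; apply ln_le; lra.
Qed.

Definition expect (p : R) (n : nat) (F : list bool -> R) : R :=
  fold_right Rplus 0 (map (fun l => pattern_prob p l * F l) (all_patterns n)).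

Section Expectation.

Variable p : R.

Lemma expect_0 (F : list bool -> R) : expect p 0 F = F nil.
Proof. unfold expect, pattern_prob; simpl; ring. Qed.

Lemma expect_S (n : nat) (F : list bool -> R) :
  expect p (S n) F =
  expect p n (fun l => p * F (true :: l) + (1 - p) * F (false :: l)).
Proof.
  unfold expect; simpl.
  induction (all_patterns n) as [|l L IH]; simpl; [reflexivity|].
  rewrite IH; unfold pattern_prob; simpl; ring.
Qed.

Lemma expect_ext (n : nat) (F G : list bool -> R) :
  (forall l, F l = G l) -> expect p n F = expect p n G.
Proof.
  intros H; unfold expect; f_equal; apply map_ext; intros l; now rewrite H.
Qed.

Lemma expect_lin (n : nat) (a b : R) (F G : list bool -> R) :
  expect p n (fun l => a * F l + b * G l) = a * expect p n F + b * expect p n G.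
Proof.
  revert F G; induction n as [|n IH]; intros F G.
  - rewrite !expect_0; ring.
  - rewrite !expect_S, <- IH; apply expect_ext; intros l; ring.
Qed.

Lemma expect_scal (n : nat) (a : R) (F : list bool -> R) :
  expect p n (fun l => a * F l) = a * expect p n F.
Proof.
  rewrite (expect_ext n _ (fun l => a * F l + 0 * F l)) by (intros; ring).
  rewrite expect_lin; ring.
Qed.

Lemma expect_const (n : nat) (c : R) : expect p n (fun _ => c) = c.
Proof.
  induction n as [|n IH]; [apply expect_0|].
  rewrite expect_S; rewrite <- IH at 1; apply expect_ext; intros; ring.
Qed.

Lemma expect_tl (n : nat) (F : list bool -> R) :
  expect p (S n) (fun l => F (tl l)) = expect p n F.
Proof. rewrite expect_S; apply expect_ext; intros; simpl; ring. Qed.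

Lemma expect_sum {A : Type} (n : nat) (s : list A) (F : A -> list bool -> R) :
  expect p n (fun l => fold_right Rplus 0 (map (fun k => F k l) s)) =
  fold_right Rplus 0 (map (fun k => expect p n (F k)) s).
Proof.
  induction s as [|k s IH]; simpl.
  - apply expect_const.
  - rewrite <- IH, (expect_ext n _ (fun l =>
      1 * F k l + 1 * fold_right Rplus 0 (map (fun j => F j l) s))) by (intros; ring).
    rewrite expect_lin; ring.
Qed.

Hypothesis hp : 0 <= p <= 1.

Lemma expect_le (n : nat) (F G : list bool -> R) :
  (forall l, F l <= G l) -> expect p n F <= expect p n G.
Proof.
  revert F G; induction n as [|n IH]; intros F G H.
  - rewrite !expect_0; apply H.
  - rewrite !expect_S; apply IH; intros l.
    pose proof (H (true :: l)); pose proof (H (false :: l)).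
    apply Rplus_le_compat; apply Rmult_le_compat_l; lra.
Qed.

End Expectation.

Lemma sum_map_ge {A : Type} (c : R) (F : A -> R) (s : list A) :
  (forall k, In k s -> c <= F k) ->
  INR (length s) * c <= fold_right Rplus 0 (map F s).
Proof.
  induction s as [|k s IH]; intros H; [simpl; lra|].
  rewrite length_cons, S_INR; cbn [map fold_right].
  pose proof (H k (or_introl eq_refl)).
  pose proof (IH (fun j Hj => H j (or_intror Hj))); lra.
Qed.

Definition refill (p : R) (b : bool) (y : R) : R := if b then 1 else (1 - p) * y.

(** [level p c w m] is the normalised battery after the arrivals [w 0], ..., [w (m-1)],
    starting from [c]. *)
Fixpoint level (p c : R) (w : nat -> bool) (m : nat) : R :=
  match m with
  | O => c
  | S m => level p (refill p (w O) c) (fun i => w (S i)) m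
  end.

Section Level.

Variable p : R.

Lemma level_ext (c : R) (w w' : nat -> bool) (m : nat) :
  (forall i, w i = w' i) -> level p c w m = level p c w' m.
Proof.
  revert c w w'; induction m as [|m IH]; intros c w w' H; simpl; [reflexivity|].
  rewrite H; apply IH; intros; apply H.
Qed.

Lemma level_S (c : R) (w : nat -> bool) (m : nat) :
  level p c w (S m) = refill p (w m) (level p c w m).
Proof.
  revert c w; induction m as [|m IH]; intros c w; [reflexivity|].
  change (level p c w (S (S m)))
    with (level p (refill p (w O) c) (fun i => w (S i)) (S m)).
  now rewrite IH.
Qed.

Lemma expect_level (n m : nat) (c : R) : p <= 1 -> (m <= n)%nat ->
  expect p n (fun l => level p c (fun i => nth i l false) m) =
  / (2 - p) + ((1 - p) ^ 2) ^ m * (c - / (2 - p)).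
Proof.
  intros hp1; revert m c; induction n as [|n IH]; intros m c Hm.
  - replace m with O by lia; rewrite expect_0; simpl; ring.
  - destruct m as [|m].
    + cbn [level]; rewrite expect_const; simpl; ring.
    + rewrite expect_S; cbn [level nth refill].
      rewrite expect_lin, !IH by lia; simpl; field; lra.
Qed.

Hypothesis hp : 0 <= p <= 1.

Lemma level_bounds (c : R) (w : nat -> bool) (m : nat) :
  0 <= c <= 1 -> 0 <= level p c w m <= 1.
Proof.
  revert c w; induction m as [|m IH]; intros c w Hc; simpl; [exact Hc|].
  apply IH; unfold refill; destruct (w O); [lra | split; nra].
Qed.

Lemma battery_level (Bbar : R) (w : nat -> bool) (k : nat) : 0 <= Bbar ->
  battery Bbar p (arrival Bbar w) k = Bbar * level p 1 (fun i => w (S i)) k.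
Proof.
  intros HB; induction k as [|k IH]; [simpl; ring|].
  rewrite level_S; simpl battery; rewrite IH.
  pose proof (level_bounds 1 (fun i => w (S i)) k ltac:(lra)).
  set (y := level p 1 (fun i => w (S i)) k) in *; clearbody y.
  assert (0 <= Bbar * y * (1 - p)) by (apply Rmult_le_pos; nra).
  assert (0 <= p * (Bbar * y)) by (repeat apply Rmult_le_pos; lra).
  assert (Bbar * y <= Bbar)
    by (rewrite <- (Rmult_1_r Bbar) at 2; apply Rmult_le_compat_l; lra).
  unfold arrival, refill; destruct (w (S k)).
  - rewrite Rmin_right; [ring | lra].
  - rewrite Rmin_left; [ring | lra].
Qed.

Lemma rate_ge_level (Bbar gamma : R) (w : nat -> bool) (k : nat) :
  0 <= Bbar -> 0 <= gamma ->
  level p 1 (fun i => w (S i)) k * (/ 2 * log2 (1 + gamma * (p * Bbar))) <=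
  / 2 * log2 (1 + gamma * alloc Bbar p (arrival Bbar w) k).
Proof.
  intros HB Hg; unfold alloc; rewrite battery_level by exact HB.
  pose proof (level_bounds 1 (fun i => w (S i)) k ltac:(lra)).
  replace (gamma * (p * (Bbar * _))) with
    (gamma * (p * Bbar) * level p 1 (fun i => w (S i)) k) by ring.
  assert (0 <= gamma * (p * Bbar)) by (apply Rmult_le_pos; nra).
  pose proof (log2_chord _ _ ltac:(eassumption) ltac:(eassumption)); lra.
Qed.

End Level.

Lemma expect_rate_ge (Bbar gamma p : R) (n k : nat) :
  0 <= Bbar -> 0 <= gamma -> 0 <= p <= 1 -> (k < n)%nat ->
  / (2 - p) * (/ 2 * log2 (1 + gamma * (p * Bbar))) <=
  expect p n (fun l =>
    / 2 * log2 (1 + gamma * alloc Bbar p (arrival Bbar (fun i => nth i l false)) k)).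
Proof.
  intros HB Hg Hp Hk.
  set (f := / 2 * log2 (1 + gamma * (p * Bbar))).
  assert (Hf : 0 <= f).
  { apply Rmult_le_pos; [lra | apply log2_1_plus_ge0, Rmult_le_pos; nra]. }
  destruct n as [|n]; [lia|].
  eapply Rle_trans;
    [| apply expect_le; [exact Hp | intros l; apply rate_ge_level; assumption]].
  rewrite (expect_ext p _ _ (fun l =>
    f * level p 1 (fun i => nth i (tl l) false) k)).
  2:{ intros l; rewrite Rmult_comm; f_equal; apply level_ext.
      intros i; destruct l; [destruct i|]; reflexivity. }
  rewrite expect_scal,
    (expect_tl p n (fun l => level p 1 (fun i => nth i l false) k)),
    expect_level by (lra || lia).
  assert (0 <= ((1 - p) ^ 2) ^ k) by (apply pow_le, pow2_ge_0).
  assert (/ (2 - p) <= 1) by (rewrite <- Rinv_1; apply Rinv_le_contravar; lra).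
  rewrite Rmult_comm; apply Rmult_le_compat_l; nra.
Qed.

Lemma throughput_ge (Bbar gamma p : R) (n : nat) :
  0 <= Bbar -> 0 <= gamma -> 0 <= p <= 1 -> (1 <= n)%nat ->
  / (2 - p) * (/ 2 * log2 (1 + gamma * (p * Bbar))) <= throughput Bbar p gamma n.
Proof.
  intros HB Hg Hp Hn.
  assert (HnR : 0 < INR n) by (apply lt_0_INR; lia).
  unfold throughput.
  fold (expect p n (fun l =>
    total_rate Bbar p gamma (arrival Bbar (fun k => nth k l false)) n)).
  unfold total_rate; rewrite expect_sum.
  eapply Rle_trans;
    [| apply Rmult_le_compat_l;
       [left; apply Rinv_0_lt_compat, HnR
       | apply sum_map_ge; intros k Hk; apply expect_rate_ge; try assumption;
         apply in_seq in Hk; lia]].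
  rewrite length_seq; right; field; lra.
Qed.

Theorem proposition4 (Bbar gamma p : R)
  (hB : 0 < Bbar) (hg : 0 < gamma) (hp0 : 0 < p) (hp1 : p <= 1) :
  Rbar_le (Finite (/ 2 * (/ 2 * log2 (1 + gamma * (p * Bbar)))))
          (LimInf_seq (fun n => throughput Bbar p gamma n)).
Proof.
  set (f := / 2 * log2 (1 + gamma * (p * Bbar))).
  assert (Hf : 0 <= f).
  { apply Rmult_le_pos; [lra | apply log2_1_plus_ge0, Rmult_le_pos; nra]. }
  assert (Hhalf : / 2 <= / (2 - p)) by (apply Rinv_le_contravar; lra).
  rewrite <- (LimInf_seq_const (/ 2 * f)).
  apply LimInf_le; exists 1%nat; intros n Hn.
  apply Rle_trans with (/ (2 - p) * f).
  - apply Rmult_le_compat_r; assumption.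
  - apply throughput_ge; lra || lia.
Qed.
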